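(* Assume $abcd\neq0$ and $\omega\in\partial B$. Then $\displaystyle\lim_{M\to\infty}\frac{\mathcal{E}_M(\omega)}{M}=\frac23$.
   Context: Setting: $C=\begin{bmatrix} a&b\\ c&d\end{bmatrix}$ a fixed $2\times2$ unitary matrix, $\Delta=\det C$, a fixed square root $\Delta^{1/2}$; for each $M\ge1$, $\Gamma_M=\{0,\dots,M-1\}$ and $E_M$ is the linear map on $\ell^2(\Gamma_M;\mathbb{C}^2)$ with $(E_M\varphi)(x)=P\varphi(x+1)+Q\varphi(x-1)$, $\varphi(-1)=\varphi(M)=0$, $P=\begin{bmatrix} a&b\\0&0\end{bmatrix}$, $Q=\begin{bmatrix}0&0\\c&d\end{bmatrix}$. For $\omega$ on the unit circle let $z=\Delta^{1/2}\omega$ and let $\varphi$ be the unique solution of $(z-E_M)\varphi=\delta_0|R\rangle$, where $|R\rangle=(0,1)^\top$; the energy is $\mathcal{E}_M(\omega)=\sum_{n=0}^{M-1}\|\varphi(n)\|^2_{\mathbb{C}^2}$. Let $x(\omega)=\frac{\omega+\omega^{-1}}{2|a|}$ and $\partial B=\{\omega:|\omega|=1,\ |x(\omega)|=1\}$. *)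

From HB Require Import structures.
From mathcomp Require Import all_boot all_order all_algebra.
From mathcomp Require Import complex.
From mathcomp Require Import all_classical all_reals all_analysis.
Set Implicit Arguments. Unset Strict Implicit. Unset Printing Implicit Defensive.
Import Order.TTheory GRing.Theory Num.Theory.
Local Open Scope ring_scope.

(* An element phi of l^2(Gamma_M; C^2) is encoded as a column vector of
   length 2*M: the component k corresponds to site x = k %/ 2 and spin
   index i = k %% 2  (i = 0 is |L>, i = 1 is |R>). *)

Section Walk.
Variable R : realType.
Local Notation C := (R[i]).

Definition unitary2 (U : 'M[C]_2) : Prop :=
  U *m (map_mx Num.conj U)^T = 1%:M.

Definition Pmx (U : 'M[C]_2) : 'M[C]_2 :=
  \matrix_(i, j) (if (i : nat) == 0%N then U i j else 0).
Definition Qmx (U : 'M[C]_2) : 'M[C]_2 :=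
  \matrix_(i, j) (if (i : nat) == 1%N then U i j else 0).

(* (E_M phi)(x) = P phi(x+1) + Q phi(x-1), with phi(-1) = phi(M) = 0 *)
Definition Emx (U : 'M[C]_2) (M : nat) : 'M[C]_(2 * M) :=
  \matrix_(k, l)
    (let x := (k %/ 2)%N in let y := (l %/ 2)%N in
     let i := inZp (k %% 2) : 'I_2 in let j := inZp (l %% 2) : 'I_2 in
     (if y == x.+1 then Pmx U i j else 0) +
     (if y.+1 == x then Qmx U i j else 0)).

(* delta_0 |R> : 1 at site 0, component R *)
Definition srcR (M : nat) : 'cV[C]_(2 * M) :=
  \col_k (if (k : nat) == 1%N then 1 else 0).

Definition solution (U : 'M[C]_2) (z : C) (M : nat) : 'cV[C]_(2 * M) :=
  invmx (z%:M - Emx U M) *m srcR M.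

(* energy  E_M(omega) = sum_n ||phi(n)||^2 , with z = s * omega, s^2 = det U *)
Definition energy (U : 'M[C]_2) (s omega : C) (M : nat) : R :=
  complex.Re (\sum_(k < 2 * M) `|solution U (s * omega) M k ord0| ^+ 2).

Definition xfun (U : 'M[C]_2) (omega : C) : C :=
  (omega + omega^-1) / (2 * `|U 0 0|).

End Walk.

From HB Require Import structures.
From mathcomp Require Import all_boot all_order all_algebra.
From mathcomp Require Import complex.
From mathcomp Require Import all_classical all_reals all_analysis.
From mathcomp Require Import ring zify.
Set Implicit Arguments. Unset Strict Implicit. Unset Printing Implicit Defensive.
Import Order.TTheory GRing.Theory Num.Theory.
Import numFieldNormedType.Exports.
Local Open Scope classical_set_scope.
Local Open Scope ring_scope.

(* On the boundary the resolvent is explicit.  Writing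
   D = det C, unitarity gives d = D a^* and c = - D b^*, and |x(omega)| = 1
   gives (omega + omega^-1)^2 = 4 |a|^2.  Hence lam = (z^2 + D) / (2 a z)
   satisfies |lam| = 1, d = lam^2 a, and w = z - lam a satisfies w^2 = c b.
   With these parameters the resolvent equation on M = N + 1 sites is solved
   by phi_L(x) = lam^(x+1) b (N - x) / (z (z + N w)) and
   phi_R(x) = lam^x (z + (N - x) w) / (z (z + N w)), and z - E_M is invertible
   as soon as z + N w != 0 (true for all large N since w != 0).  Taking
   moduli, site x carries energy G_N(N - x) with
   G_N(m) = (2 |w|^2 m^2 + 2 Re(z w^* ) m + 1) / |z + N w|^2, so the energy is
   a sum of squares of order N^3 over a denominator |w|^2 N^2, and
   E_M / M -> (2 |w|^2 / 3) / |w|^2 = 2/3. *)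

Section Unitary.
Variable R : realType.
Local Notation C := (R[i]).

Lemma det_mx2 (U : 'M[C]_2) : \det U = U 0 0 * U 1 1 - U 0 1 * U 1 0.
Proof.
rewrite (expand_det_row _ 0) !big_ord_recl big_ord0 addr0 /cofactor /=.
rewrite !det_mx11 /= !mxE /=.
have -> : lift (0 : 'I_2) (0 : 'I_1) = 1 by exact: val_inj.
have -> : lift (1 : 'I_2) (0 : 'I_1) = 0 by exact: val_inj.
rewrite /= expr0 expr1; ring.
Qed.

Lemma unitary2_entries (U : 'M[C]_2) : unitary2 U ->
  [/\ U 1 1 = \det U * (U 0 0)^*, U 1 0 = - (\det U * (U 0 1)^*)
    & \det U * (\det U)^* = 1].
Proof.
rewrite det_mx2 /unitary2 => hU.
have e i j : (U *m (map_mx Num.conj U)^T) i j = (1%:M : 'M[C]_2) i j by rewrite hU.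
have e00 := e 0 0; have e10 := e 1 0; have e11 := e 1 1.
move: e00 e10 e11; rewrite !mxE !big_ord_recl !big_ord0 !mxE /= !addr0.
have -> : lift ord0 ord0 = 1 :> 'I_2 by exact: val_inj.
set a := U 0 0; set b := U 0 1; set c := U 1 0; set d := U 1 1.
move=> /= row0 orth row1.
have hca : c * a^* = - (d * b^*) by apply/eqP; rewrite -addr_eq0 orth.
have hd : d = (a * d - b * c) * a^*.
  have -> : (a * d - b * c) * a^* = d * (a * a^*) - b * (c * a^*) by ring.
  rewrite hca; transitivity (d * (a * a^* + b * b^*)); first by rewrite row0 mulr1.
  ring.
have hc : c = - ((a * d - b * c) * b^*).
  have -> : (a * d - b * c) * b^* = - (a * (c * a^*)) - c * (b * b^*).
    by rewrite hca; ring.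
  transitivity (c * (a * a^* + b * b^*)); first by rewrite row0 mulr1.
  ring.
split => //; set D := a * d - b * c in hd hc *.
move: row1; rewrite hd hc !rmorphN !rmorphM /= !conjCK.
have -> : - (D * b^*) * - (D^* * b) + D * a^* * (D^* * a)
  = D * D^* * (a * a^* + b * b^*) by ring.
by rewrite row0 mulr1.
Qed.

End Unitary.

Section Sites.
Variable R : realType.
Local Notation C := (R[i]).

Definition site M (psi : 'cV[C]_(2 * M)) (x i : nat) : C :=
  if (insub (2 * x + i)%N : option 'I_(2 * M)) is Some k then psi k 0 else 0.

Definition of_sites M (f : nat -> nat -> C) : 'cV[C]_(2 * M) :=
  \col_(k < 2 * M) f (k %/ 2)%N (k %% 2)%N.

Lemma site_divmod (k : nat) : (2 * (k %/ 2) + k %% 2)%N = k.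
Proof. by rewrite mulnC -divn_eq. Qed.

Lemma site_div x i : (i < 2)%N -> ((2 * x + i) %/ 2 = x)%N.
Proof. by move=> hi; rewrite mulnC divnMDl // divn_small // addn0. Qed.

Lemma site_mod x i : (i < 2)%N -> ((2 * x + i) %% 2 = i)%N.
Proof. by move=> hi; rewrite mulnC modnMDl modn_small. Qed.

Lemma site_ord M (psi : 'cV[C]_(2 * M)) (k : 'I_(2 * M)) :
  site psi (k %/ 2) (k %% 2) = psi k 0.
Proof. by rewrite /site site_divmod valK. Qed.

Lemma site_of_sites M f x i : (x < M)%N -> (i < 2)%N ->
  site (of_sites M f) x i = f x i.
Proof.
move=> hx hi; rewrite /site; case: insubP => [k _ hk|]; last first.
  by rewrite (_ : (2 * x + i < 2 * M)%N) //; lia.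
by rewrite mxE hk site_div // site_mod.
Qed.

Lemma sites_eq0 M (psi : 'cV[C]_(2 * M)) :
  (forall x i, (x < M)%N -> (i < 2)%N -> site psi x i = 0) -> psi = 0.
Proof.
move=> h; apply/matrixP => k j; rewrite ord1 mxE -site_ord h ?ltn_mod //.
by rewrite ltn_divLR //; have := ltn_ord k; lia.
Qed.

Lemma sum_sites M (F : nat -> nat -> C) :
  \sum_(k < 2 * M) F (k %/ 2)%N (k %% 2)%N = \sum_(x < M) (F x 0%N + F x 1%N).
Proof.
rewrite -(big_mkord xpredT (fun k => F (k %/ 2)%N (k %% 2)%N)).
elim: M => [|M IH]; first by rewrite muln0 big_geq // big_ord0.
rewrite mulnSr addn2 !big_nat_recr //= IH big_ord_recr /= -addrA.
have d0 := site_div M (isT : (0 < 2)%N); have d1 := site_div M (isT : (1 < 2)%N).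
have m0 := site_mod M (isT : (0 < 2)%N); have m1 := site_mod M (isT : (1 < 2)%N).
rewrite addn0 in d0 m0; rewrite addn1 in d1 m1.
by rewrite d0 m0 d1 m1.
Qed.

Lemma sum_pick M t (H : nat -> C) :
  \sum_(y < M) (if (y : nat) == t then H y else 0) = if (t < M)%N then H t else 0.
Proof.
elim: M => [|M IH]; first by rewrite big_ord0.
rewrite big_ord_recr /= IH.
case: (ltngtP t M) => [h|h|->] /=; rewrite ?addr0 ?add0r ?ltnS ?leqnn //.
- by rewrite ltnW.
- by rewrite leqNgt h.
Qed.

Lemma sum_pick_pred M t (H : nat -> C) :
  \sum_(y < M) (if (y : nat).+1 == t then H y else 0) =
  if (0 < t)%N && (t.-1 < M)%N then H t.-1 else 0.
Proof.
case: t => [|t] /=; first by rewrite big1.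
by under eq_bigr => y _ do rewrite eqSS; rewrite sum_pick.
Qed.

End Sites.

(* The resolvent equation (z - E_M) phi = delta_0 |R>, read site by site:
   row 2x of E_M picks P phi(x+1) = a phi_L(x+1) + b phi_R(x+1), and row 2x+1
   picks Q phi(x-1) = c phi_L(x-1) + d phi_R(x-1), with phi(-1) = phi(M) = 0. *)
Section Resolvent.
Variable R : realType.
Local Notation C := (R[i]).
Variable U : 'M[C]_2.

Definition hop M (g : nat -> nat -> C) (x i : nat) : C :=
  if i == 0%N then
    (if (x.+1 < M)%N then U 0 0 * g x.+1 0%N + U 0 1 * g x.+1 1%N else 0)
  else (if (0 < x)%N then U 1 0 * g x.-1 0%N + U 1 1 * g x.-1 1%N else 0).

Lemma Emx_mul_site M (psi : 'cV[C]_(2 * M)) (k : 'I_(2 * M)) :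
  (Emx U M *m psi) k 0 = hop M (site psi) (k %/ 2) (k %% 2).
Proof.
set x := (k %/ 2)%N; set i := (k %% 2)%N.
have inZp0 : inZp 0 = 0 :> 'I_2 by exact: val_inj.
have inZp1 : inZp 1 = 1 :> 'I_2 by exact: val_inj.
rewrite mxE; under eq_bigr => l _ do rewrite mxE -site_ord.
rewrite (sum_sites M (fun y j => ((if y == x.+1 then Pmx U (inZp i) (inZp j) else 0)
   + (if y.+1 == x then Qmx U (inZp i) (inZp j) else 0)) * site psi y j)).
pose hopP y := Pmx U (inZp i) 0 * site psi y 0 + Pmx U (inZp i) 1 * site psi y 1.
pose hopQ y := Qmx U (inZp i) 0 * site psi y 0 + Qmx U (inZp i) 1 * site psi y 1.
transitivity (\sum_(y < M) ((if (y : nat) == x.+1 then hopP y else 0)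
  + (if (y : nat).+1 == x then hopQ y else 0))).
  apply: eq_bigr => y _; rewrite /hopP /hopQ inZp0 inZp1.
  by case: (_ == _); case: (_ == _); rewrite ?mul0r ?add0r ?addr0 ?mulrDl //; ring.
rewrite big_split /= sum_pick sum_pick_pred /hopP /hopQ /hop {hopP hopQ}.
have : (i < 2)%N by rewrite ltn_mod.
case: i => [|[|//]] _ /=; rewrite ?inZp0 ?inZp1 !mxE /=.
  by rewrite !mul0r addr0 if_same addr0.
have hx : (x < M)%N by rewrite /x ltn_divLR //; have := ltn_ord k; lia.
have -> : (x.-1 < M)%N by rewrite (leq_ltn_trans (leq_pred x) hx).
by rewrite !mul0r addr0 andbT if_same add0r.
Qed.

Lemma site_ord_bound M x i : (x < M)%N -> (i < 2)%N -> (2 * x + i < 2 * M)%N.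
Proof. lia. Qed.

Lemma resolvent_site M z (psi : 'cV[C]_(2 * M)) x i (hx : (x < M)%N) (hi : (i < 2)%N) :
  ((z%:M - Emx U M) *m psi) (Ordinal (site_ord_bound hx hi)) 0 =
  z * site psi x i - hop M (site psi) x i.
Proof.
have := Emx_mul_site psi (Ordinal (site_ord_bound hx hi)).
rewrite /= site_div // site_mod // => <-.
by rewrite mulmxBl mul_scalar_mx !mxE -[psi _ _]site_ord /= site_div // site_mod.
Qed.

Lemma resolvent_of_sites M z f :
  (forall x i, (x < M)%N -> (i < 2)%N ->
     z * f x i - hop M f x i = if (x == 0%N) && (i == 1%N) then 1 else 0) ->
  (z%:M - Emx U M) *m of_sites M f = srcR R M.
Proof.
move=> hf; apply/matrixP => k j; rewrite ord1; case: k => k hk.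
move: (k %/ 2)%N (k %% 2)%N (site_divmod k) (ltn_mod k 2) => x i e.
rewrite -{}e in hk * => hi; have hx : (x < M)%N by lia.
have -> : Ordinal hk = Ordinal (site_ord_bound hx hi) by exact: val_inj.
have e01 : ((2 * x + i)%N == 1%N) = (x == 0%N) && (i == 1%N) by lia.
have -> : srcR R M (Ordinal (site_ord_bound hx hi)) 0
    = if (x == 0%N) && (i == 1%N) then 1 else 0 by rewrite mxE /= e01.
rewrite resolvent_site site_of_sites // -hf //; congr (_ - _); rewrite /hop; case: (i == 0%N).
- by case: ifP => // h; rewrite !site_of_sites.
- by case: ifP => // h; rewrite !site_of_sites //; lia.
Qed.

Lemma resolvent_kernel M z (psi : 'cV[C]_(2 * M)) :
  (z%:M - Emx U M) *m psi = 0 ->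
  forall x i, (x < M)%N -> (i < 2)%N -> z * site psi x i = hop M (site psi) x i.
Proof.
move=> h x i hx hi; apply/eqP; rewrite -subr_eq0 -resolvent_site h.
by rewrite mxE.
Qed.

End Resolvent.

Lemma unitmx_of_kernel (F : fieldType) n (A : 'M[F]_n) :
  (forall v : 'cV_n, A *m v = 0 -> v = 0) -> A \in unitmx.
Proof.
move=> h; rewrite -unitmx_tr -row_free_unit; apply: inj_row_free => v hv.
have : A *m v^T = 0 by rewrite -[A]trmxK -trmx_mul hv trmx0.
by move/h => /(congr1 trmx); rewrite trmxK trmx0.
Qed.

(* We parametrise the
   coin by lam and w with  w = z - lam a,  d = lam^2 a  and  c b = w^2
   (these hold on the boundary dB, see [boundary_parameters]).  With
   M = N + 1 sites the solution of (z - E_M) phi = delta_0 |R> is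
     phi_L(x) = lam^(x+1) b (N - x) / (z (z + N w)),
     phi_R(x) = lam^x (z + (N - x) w) / (z (z + N w)),
   while the homogeneous recursion started from phi_L(0) = 1 is (hom_L, hom_R). *)
Section ExplicitAlgebra.
Variable F : fieldType.
Variables a b c d z lam w : F.
Hypothesis hw : w = z - lam * a.
Hypothesis hd : d = lam ^+ 2 * a.
Hypothesis hcb : c * b = w ^+ 2.
Hypothesis hz : z != 0.

Definition sol_L (N x : nat) : F := lam ^+ x.+1 * b * (N - x)%:R / (z * (z + N%:R * w)).
Definition sol_R (N x : nat) : F := lam ^+ x * (z + (N - x)%:R * w) / (z * (z + N%:R * w)).

Lemma sol_L_eq N x : z + N%:R * w != 0 -> (x <= N)%N ->
  z * sol_L N x = if (x < N)%N then a * sol_L N x.+1 + b * sol_R N x.+1 else 0.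
Proof.
move=> hE hx; rewrite /sol_L /sol_R; case: ifP => h; last first.
  by rewrite (_ : N - x = 0)%N ?mulr0 ?mul0r ?mulr0 //; lia.
have -> : (N - x = (N - x.+1).+1)%N by lia.
by rewrite mulrSr !exprS hw; field; rewrite -hw hE hz.
Qed.

Lemma sol_R_eq N x : z + N%:R * w != 0 -> (x <= N)%N ->
  z * sol_R N x = (if (0 < x)%N then c * sol_L N x.-1 + d * sol_R N x.-1 else 0)
                  + (if x == 0%N then 1 else 0).
Proof.
move=> hE hx; rewrite /sol_L /sol_R; case: x hx => [|x] hx /=.
  by rewrite subn0 expr0 mul1r add0r mulrA divff // mulf_neq0.
have -> : (N - x = (N - x.+1).+1)%N by lia.
have -> : c * (lam ^+ x.+1 * b * (N - x.+1).+1%:R / (z * (z + N%:R * w)))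
   = (c * b) * (lam ^+ x.+1 * (N - x.+1).+1%:R / (z * (z + N%:R * w))) by ring.
by rewrite addr0 hcb hd mulrSr !exprS hw; field; rewrite -hw hE hz.
Qed.

Hypothesis hlam : lam != 0.
Hypothesis hb : b != 0.
Hypothesis ha : a != 0.

Definition hom_L (n : nat) : F := lam ^+ n * (z + n%:R * w) / z.
Definition hom_R (n : nat) : F := lam ^+ n * n%:R * w ^+ 2 / (lam * z * b).

(* The homogeneous recursion, solved forward: phi_R(n+1) from row 2n+3 and
   phi_L(n+1) from row 2n. *)
Lemma hom_R_step n : z^-1 * (c * hom_L n + d * hom_R n) = hom_R n.+1.
Proof.
rewrite /hom_L /hom_R (_ : c = w ^+ 2 / b); last by rewrite -hcb mulfK.
by rewrite hd !exprS mulrSr hw; field; rewrite hb hz hlam.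
Qed.

Lemma hom_L_step n : a^-1 * (z * hom_L n - b * hom_R n.+1) = hom_L n.+1.
Proof.
by rewrite /hom_L /hom_R !exprS mulrSr hw; field; rewrite hb hz hlam ha.
Qed.

End ExplicitAlgebra.

Section SolutionFormula.
Variable R : realType.
Local Notation C := (R[i]).
Variables (U : 'M[C]_2) (z lam w : C) (N : nat).
Hypothesis hw : w = z - lam * U 0 0.
Hypothesis hd : U 1 1 = lam ^+ 2 * U 0 0.
Hypothesis hcb : U 1 0 * U 0 1 = w ^+ 2.
Hypothesis hz : z != 0.
Hypothesis hlam : lam != 0.
Hypothesis hb : U 0 1 != 0.
Hypothesis ha : U 0 0 != 0.
Hypothesis hE : z + N%:R * w != 0.

Definition sol_sites (x i : nat) : C :=
  if i == 0%N then sol_L (U 0 1) z lam w N x else sol_R z lam w N x.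

Lemma sol_sites_solves :
  (z%:M - Emx U N.+1) *m of_sites N.+1 sol_sites = srcR R N.+1.
Proof.
apply: resolvent_of_sites => x i; rewrite ltnS => hx.
case: i => [|[|//]] _; rewrite /hop /sol_sites /=.
  by rewrite ltnS (sol_L_eq (U 0 1) hw hz hE hx) subrr andbF.
by rewrite (sol_R_eq hw hd hcb hz hE hx) addrC addKr eqxx andbT.
Qed.

Lemma kernel_sites (v : 'cV[C]_(2 * N.+1)) :
  (z%:M - Emx U N.+1) *m v = 0 ->
  forall n, (n <= N)%N -> site v n 0 = site v 0 0 * hom_L z lam w n
                        /\ site v n 1 = site v 0 0 * hom_R (U 0 1) z lam w n.
Proof.
move=> hv; have rec := resolvent_kernel hv; rewrite /hop /= in rec.
elim=> [|n IH] hn.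
  split; first by rewrite /hom_L expr0 mul0r addr0 mul1r divff // mulr1.
  have := rec 0%N 1%N isT isT => /= /eqP; rewrite mulf_eq0 (negbTE hz) /= => /eqP ->.
  by rewrite /hom_R !mulr0 !mul0r mulr0.
have [e0 e1] := IH (ltnW hn).
have e1' : site v n.+1 1 = site v 0 0 * hom_R (U 0 1) z lam w n.+1.
  rewrite -(hom_R_step hw hd hcb hz hlam hb n) -[site v n.+1 1](mulKf hz).
  by rewrite (rec n.+1 1%N) //= e0 e1; ring.
split => //; rewrite -(hom_L_step hw hz hlam hb ha n) -[site v n.+1 0](mulKf ha).
have := rec n 0%N (ltnW hn) isT; rewrite /= ltnS hn => hrow.
have -> : U 0 0 * site v n.+1 0 = z * site v n 0 - U 0 1 * site v n.+1 1.
  by rewrite hrow; ring.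
by rewrite e0 e1'; ring.
Qed.

(* z - E_{N+1} is invertible: the last row of the homogeneous recursion
   forces phi_L(0) hom_L(N) = 0, and hom_L(N) != 0. *)
Lemma resolvent_unit : (z%:M - Emx U N.+1) \in unitmx.
Proof.
apply: unitmx_of_kernel => v hv; have key := kernel_sites hv.
have hv0 : site v 0 0 = 0.
  have := resolvent_kernel hv (ltnSn N) (isT : (0 < 2)%N); rewrite /hop /= ltnn.
  move/eqP; rewrite mulf_eq0 (negbTE hz) /= (key N (leqnn N)).1 mulf_eq0 => /orP[/eqP //|].
  by rewrite /hom_L !mulf_eq0 expf_eq0 invr_eq0 (negbTE hz) (negbTE hE) (negbTE hlam) andbF.
apply: sites_eq0 => x i hx hi; have [e0 e1] := key x hx.
by case: i hi => [|[|//]] _; rewrite ?e0 ?e1 hv0 mul0r.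
Qed.

Lemma solution_formula : solution U z N.+1 = of_sites N.+1 sol_sites.
Proof. by rewrite /solution -sol_sites_solves mulKmx // resolvent_unit. Qed.

End SolutionFormula.

(* With W = |w|^2 and rho = Re (z w^* ),
   |z + t w|^2 = 1 + 2 rho t + W t^2 for real t, so the energy carried by
   site x of N+1 sites is  G_N(N - x), where
   G_N(m) = (2 W m^2 + 2 rho m + 1) / (1 + 2 rho N + W N^2). *)
Section Moduli.
Variable R : realType.
Local Notation C := (R[i]).

Definition site_energy (W rho : R) (N m : nat) : R :=
  (2 * W * m%:R ^+ 2 + 2 * rho * m%:R + 1) / (1 + 2 * rho * N%:R + W * N%:R ^+ 2).

Variables (z w : C) (W rho : R).
Hypothesis hnz : `|z| = 1.
Hypothesis hW : W%:C%C = w * w^*.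
Hypothesis hrho : rho%:C%C = 'Re (z * w^*).

Lemma norm_shift_sq (n : nat) :
  `|z + n%:R * w| ^+ 2 = (1 + 2 * rho * n%:R + W * n%:R ^+ 2)%:C%C.
Proof.
have hzz : z * z^* = 1 by rewrite -normCK hnz expr1n.
rewrite normCK rmorphD rmorphM rmorph_nat /=.
rewrite !(rmorphD, rmorphM, rmorph1, rmorph_nat, rmorphXn) /= hW hrho ReE.
rewrite [(z * w^*)^*]rmorphM /= conjCK.
transitivity (z * z^* + n%:R * (z * w^* + z^* * w) + w * w^* * n%:R ^+ 2); first by ring.
by rewrite hzz; field.
Qed.

Lemma sol_sites_energy (lam b : C) (N x : nat) :
  `|lam| = 1 -> `|b| = `|w| ->
  `|sol_L b z lam w N x| ^+ 2 + `|sol_R z lam w N x| ^+ 2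
    = (site_energy W rho N (N - x))%:C%C.
Proof.
move=> hnl hnb; rewrite /sol_L /sol_R /site_energy.
rewrite !(normrM, normfV, normrX, normr_nat) hnl hnz hnb !expr1n !mul1r.
rewrite !exprMn !exprVn !norm_shift_sq normCK -hW -mulrDl fmorph_div.
by congr (_ / _); rewrite !(rmorphD, rmorphM, rmorphXn, rmorph_nat, rmorph1) /=; ring.
Qed.

End Moduli.

Section EnergyAsymptotics.
Variable R : realType.
Local Notation C := (R[i]).

Lemma energy_formula (U : 'M[C]_2) (s om lam w : C) (W rho : R) (N : nat) :
  let z := s * om in
  w = z - lam * U 0 0 -> U 1 1 = lam ^+ 2 * U 0 0 -> U 1 0 * U 0 1 = w ^+ 2 ->
  lam != 0 -> U 0 1 != 0 -> U 0 0 != 0 -> z + N%:R * w != 0 ->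
  `|lam| = 1 -> `|z| = 1 -> `|U 0 1| = `|w| ->
  W%:C%C = w * w^* -> rho%:C%C = 'Re (z * w^*) ->
  energy U s om N.+1 = \sum_(m < N.+1) site_energy W rho N m.
Proof.
move=> z hw hd hcb hlam hb ha hE hnl hnz hnb hW hrho.
have hz : z != 0 by rewrite -normr_eq0 hnz oner_eq0.
rewrite /energy (solution_formula hw hd hcb hz hlam hb ha hE).
under eq_bigr => k _ do rewrite mxE.
rewrite (sum_sites N.+1 (fun x i => `|sol_sites U z lam w N x i| ^+ 2)) /sol_sites /=.
under eq_bigr => x _ do rewrite (sol_sites_energy hnz hW hrho N x hnl hnb).
rewrite -rmorph_sum /= (reindex_inj rev_ord_inj) /=.
by apply: eq_bigr => x _; rewrite subSS subKn // -ltnS.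
Qed.

Lemma sum_site_energy_num (W rho : R) N :
  \sum_(m < N.+1) (2 * W * m%:R ^+ 2 + 2 * rho * m%:R + 1) =
  N.+1%:R * (W * N%:R * (2 * N%:R + 1) / 3 + rho * N%:R + 1).
Proof.
elim: N => [|N IH]; first by rewrite big_ord1 /=; field.
by rewrite big_ord_recr /= IH !mulrS; field.
Qed.

Definition energy_per_site (W rho : R) (N : nat) : R :=
  (W * N%:R * (2 * N%:R + 1) / 3 + rho * N%:R + 1) / (1 + 2 * rho * N%:R + W * N%:R ^+ 2).

Lemma energy_per_siteE (W rho : R) N :
  (\sum_(m < N.+1) site_energy W rho N m) / N.+1%:R = energy_per_site W rho N.
Proof.
rewrite /site_energy -mulr_suml sum_site_energy_num /energy_per_site.
by rewrite mulrAC [N.+1%:R * _]mulrC mulfK ?pnatr_eq0.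
Qed.

(* Dividing numerator and denominator by N^2: the ratio tends to (2W/3) / W. *)
Lemma energy_per_site_cvg (W rho : R) : 0 < W ->
  energy_per_site W rho @ \oo --> (2 / 3 : R).
Proof.
move=> W0; rewrite -cvg_shiftS; pose h n : R := n.+1%:R^-1.
have h0 : h @ \oo --> (0 : R) by exact: cvg_harmonic.
have -> : (fun n => energy_per_site W rho n.+1) = (fun n =>
    (W * (2 + h n) / 3 + rho * h n + h n * h n) / (W + 2 * rho * h n + h n * h n)).
  apply: funext => n; rewrite /energy_per_site /h.
  have hN : (n.+1%:R : R) != 0 by rewrite pnatr_eq0.
  set N := n.+1%:R; set D := 1 + 2 * rho * N + W * N ^+ 2.
  have -> : W + 2 * rho * N^-1 + N^-1 * N^-1 = D / N ^+ 2 by rewrite /D; field.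
  have [->|D0] := eqVneq D 0; first by rewrite mul0r !invr0 !mulr0.
  have e : 1 + n%:R = N by rewrite /N mulrS.
  by rewrite /D; field; rewrite e hN D0.
have -> : (2 / 3 : R) = (W * (2 + 0) / 3 + rho * 0 + 0 * 0) / (W + 2 * rho * 0 + 0 * 0).
  by field; rewrite gt_eqF.
have hc (c : R) : (fun=> c) @ \oo --> c by exact: cvg_cst.
apply: cvgM.
- apply: cvgD; [apply: cvgD|]; apply: cvgM => //.
  by apply: cvgM => //; apply: cvgD.
- apply: cvgV; first by rewrite !mulr0 !addr0 gt_eqF.
  by apply: cvgD; [apply: cvgD|] => //; apply: cvgM.
Qed.

End EnergyAsymptotics.

(* On the boundary dB the walk is "critical": lam = (z^2 + D) / (2 a z) has
   modulus one and w = z - lam a satisfies w^2 = c b, which is what makes the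
   resolvent grow only linearly in the number of sites. *)
Section Boundary.
Variable R : realType.
Local Notation C := (R[i]).

Lemma unit_norm_conj (u : C) : `|u| = 1 -> u^* = u^-1.
Proof.
move=> hu; have u0 : u != 0 by rewrite -normr_eq0 hu oner_eq0.
by apply: (mulfI u0); rewrite -normCK hu expr1n divff.
Qed.

(* omega + omega^-1 is real for |omega| = 1, so |x(omega)| = 1 means
   x(omega)^2 = 1, i.e. (omega + omega^-1)^2 = 4 |a|^2. *)
Lemma boundary_sq (U : 'M[C]_2) (omega : C) :
  U 0 0 != 0 -> `|omega| = 1 -> `|xfun U omega| = 1 ->
  (omega + omega^-1) ^+ 2 = 4 * (U 0 0 * (U 0 0)^*).
Proof.
move=> ha hom hx; have hna : `|U 0 0| != 0 by rewrite normr_eq0.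
have hxc : (xfun U omega)^* = xfun U omega.
  rewrite /xfun fmorph_div rmorphD fmorphV /= unit_norm_conj // invrK.
  by rewrite (geC0_conj (x := 2 * `|U 0 0|)) ?mulr_ge0 ?normr_ge0 // addrC.
have : xfun U omega ^+ 2 = 1 by rewrite expr2 -{2}hxc -normCK hx expr1n.
rewrite /xfun expr_div_n => /(congr1 (fun t => t * (2 * `|U 0 0|) ^+ 2)).
rewrite divfK ?mul1r; last by rewrite expf_neq0 // mulf_neq0 // pnatr_eq0.
by move=> ->; rewrite exprMn normCK; ring.
Qed.

Lemma boundary_parameters (U : 'M[C]_2) (s omega : C) :
  unitary2 U -> s ^+ 2 = \det U -> U 0 0 * U 0 1 * U 1 0 * U 1 1 != 0 ->
  `|omega| = 1 -> `|xfun U omega| = 1 ->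
  let z := s * omega in
  exists lam w : C,
    [/\ w = z - lam * U 0 0, U 1 1 = lam ^+ 2 * U 0 0, U 1 0 * U 0 1 = w ^+ 2
       & w != 0] /\ [/\ `|lam| = 1, `|z| = 1 & `|U 0 1| = `|w|].
Proof.
move=> hU hs habcd hom hx z; have [hd hc hD] := unitary2_entries hU.
move: habcd; rewrite !mulf_eq0 !negb_or => /andP[/andP[/andP[ha hb] hc0] _].
have hx2 := boundary_sq ha hom hx.
have hdet : U 1 0 * U 0 1 = U 0 0 * U 1 1 - \det U by rewrite det_mx2; ring.
have hnD : `|\det U| = 1.
  by apply/eqP; rewrite -(@sqrp_eq1 _ `|\det U|) // normCK hD.
have hs0 : s != 0.
  by apply: contra_eq_neq hnD => s0; rewrite -hs s0 expr0n normr0 eq_sym oner_neq0.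
have ho0 : omega != 0 by rewrite -normr_eq0 hom oner_eq0.
set a := U 0 0 in ha hd hx2 hdet *; set b := U 0 1 in hb hc hdet *.
set D := \det U in hs hd hc hnD hdet.
exists ((z ^+ 2 + D) / (2 * a * z)), (z - (z ^+ 2 + D) / (2 * a * z) * a).
set lam := (z ^+ 2 + D) / (2 * a * z); set w := z - lam * a.
have hac : a^* = (omega + omega^-1) ^+ 2 / (4 * a) by rewrite hx2; field.
have hd' : U 1 1 = lam ^+ 2 * a.
  by rewrite hd hac /lam /z -hs; field; rewrite ha hs0 ho0.
have hcb : U 1 0 * b = w ^+ 2.
  by rewrite hdet hd' /w /lam /z -hs; field; rewrite ha hs0 ho0.
have hna : `|a| != 0 by rewrite normr_eq0.
have hnl : `|lam| = 1.
  apply/eqP; rewrite -(@sqrp_eq1 _ `|lam|) //; apply/eqP/(mulIf hna).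
  by rewrite -normrX -normrM -hd' hd normrM hnD !mul1r norm_conjC.
have hnz : `|z| = 1.
  have /eqP : `|s| ^+ 2 = 1 by rewrite -normrX hs hnD.
  by rewrite sqrp_eq1 // => /eqP hns; rewrite /z normrM hns hom mulr1.
have hnb : `|b| = `|w|.
  apply/esym/eqP; rewrite -(@eqrXn2 _ 2) //; apply/eqP.
  by rewrite -normrX -hcb normrM hc normrN normrM hnD mul1r norm_conjC expr2.
split; split => //; apply: contraNneq (mulf_neq0 hc0 hb) => w0.
by rewrite hcb w0 expr0n.
Qed.

End Boundary.

(* z + n w vanishes for at most one n when w != 0. *)
Lemma shift_neq0_near (R : realType) (z w : R[i]) :
  w != 0 -> \forall n \near \oo, z + n%:R * w != 0.
Proof.
move=> hw; have [[n0 hn0]|none] := pselect (exists n0 : nat, z + n0%:R * w = 0).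
  exists n0.+1 => // n /= hn; apply/eqP => hn1.
  have /eqP : (n%:R - n0%:R) * w = 0.
    transitivity ((z + n%:R * w) - (z + n0%:R * w)); first by ring.
    by rewrite hn1 hn0 subrr.
  rewrite mulf_eq0 (negbTE hw) orbF subr_eq0 eqr_nat => /eqP e.
  by move: hn; rewrite e ltnn.
by exists 0%N => // n _; apply/eqP => hn; apply: none; exists n.
Qed.

Theorem mainTheorem8 (R : realType) (U : 'M[R[i]]_2) (s omega : R[i]) :
  unitary2 U ->
  s ^+ 2 = \det U ->
  U 0 0 * U 0 1 * U 1 0 * U 1 1 != 0 ->
  `|omega| = 1 ->
  `|xfun U omega| = 1 ->
  (fun M : nat => energy U s omega M / M%:R : R) @ \oo --> (2 / 3 : R).
Proof.
move=> hU hs habcd hom hx.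
have [lam [w [[hw hd hcb hw0] [hnl hnz hnb]]]] :=
  boundary_parameters hU hs habcd hom hx.
move: habcd; rewrite !mulf_eq0 !negb_or => /andP[/andP[/andP[ha hb] _] _].
have hlam : lam != 0 by rewrite -normr_eq0 hnl oner_eq0.
pose W := complex.Re (w * w^*); pose rho := complex.Re (s * omega * w^*).
have hW : W%:C%C = w * w^* by rewrite RRe_real // ger0_real // mul_conjC_ge0.
have hrho : rho%:C%C = 'Re (s * omega * w^*) by rewrite complexRe.
have W0 : 0 < W by rewrite -ltcR hW -normCK exprn_gt0 // normr_gt0.
rewrite -cvg_shiftS /=; apply: cvg_trans (energy_per_site_cvg rho W0).
apply: near_eq_cvg; near=> n; rewrite -energy_per_siteE.
rewrite (energy_formula hw hd hcb hlam hb ha _ hnl hnz hnb hW hrho) //.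
by near: n; exact: shift_neq0_near.
Unshelve. all: by end_near. Qed.
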